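(* Let $A$ be a wqo and let $A_1,\dots,A_m$ be a quasi-incomparable family of subsets of $A$. Then $\mathbf{w}(A)\ge \mathbf{w}(A_m)+\mathbf{w}(A_{m-1})+\dots+\mathbf{w}(A_1)$, where $+$ is ordinary ordinal addition.
   Context: A wqo is a quasi-order with no infinite bad sequence (a sequence $x_0,x_1,\dots$ is bad if there are no $i<j$ with $x_i\le x_j$). $x\perp y$ means neither $x\le y$ nor $y\le x$. The width $\mathbf{w}(A)$ of a wqo $A$ is the rank of the forest $\mathrm{Inco}(A)$ of nonempty finite sequences of pairwise incomparable elements ordered by initial segment, i.e. $\mathbf{w}(A)=\sup_{s}(r(s)+1)$ where $r(s)=\sup\{r(t)+1: t \text{ child of } s\}$; subsets of $A$ carry the induced order. For subsets $S,T\subseteq A$, write $S\perp T$ if $s\perp t$ for all $s\in S,t\in T$. A sequence $A_1,\dots,A_m$ of subsets of $A$ is a quasi-incomparable family if for every $i\in[1,m]$ and every finite $Y\subseteq A_1\cup\dots\cup A_{i-1}$ there exists $A_i'\subseteq A_i$ such that $A_i'$ (with the induced order) is order-isomorphic to $A_i$ and $A_i'\perp Y$. (This notion depends on the numbering of the $A_i$.) *)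

(* Ordinals are represented as well-founded trees
   (Brouwer-style ordinals with arbitrary Type-indexed suprema). *)
From Stdlib Require Import List ClassicalEpsilon.
Import ListNotations.

(* [osup I f] denotes the least ordinal strictly greater than every [f i],
   i.e. sup_{i in I} (f i + 1). *)
Inductive Ord : Type :=
  | osup : forall (I : Type), (I -> Ord) -> Ord.

Definition ozero : Ord := osup Empty_set (fun e => match e with end).

(* ordinal order: osup I f <= osup J g  iff  every f i < osup J g,
   iff every f i <= some g j *)
Fixpoint ole (a b : Ord) : Prop :=
  match a, b with
  | osup X f, osup Y g => forall i : X, exists j : Y, ole (f i) (g j)
  end.

(* ordinary ordinal addition, by recursion on the right argument:
   a + 0 = a, a + sup_j (g j + 1) = sup_j (a + g j + 1) *)
Fixpoint oadd (a b : Ord) : Ord :=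
  match b with
  | osup Y g =>
      match a with
      | osup X f =>
          osup (X + Y)%type
            (fun k => match k with
                      | inl i => f i
                      | inr j => oadd a (g j)
                      end)
      end
  end.

Section QO.
Variable T : Type.
Variable le : T -> T -> Prop.

Definition quasi_order : Prop :=
  (forall x, le x x) /\ (forall x y z, le x y -> le y z -> le x z).

Definition wqo : Prop :=
  quasi_order /\ forall f : nat -> T, exists i j, i < j /\ le (f i) (f j).

Definition incomp (x y : T) : Prop := ~ le x y /\ ~ le y x.

Definition incomp_sets (S U : T -> Prop) : Prop :=
  forall x y, S x -> U y -> incomp x y.

Definition inco_node (S : T -> Prop) (s : list T) : Prop :=
  s <> [] /\ Forall S s /\ ForallOrdPairs incomp s.

Definition inco_child (S : T -> Prop) (t s : list T) : Prop :=
  inco_node S t /\ exists x, t = s ++ [x].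

Definition rank_acc (S : T -> Prop) : forall s, Acc (inco_child S) s -> Ord :=
  Fix_F (fun _ => Ord)
    (fun s rec => osup {t | inco_child S t s}
                       (fun t => rec (proj1_sig t) (proj2_sig t))).

(* total version (the forest is well-founded whenever the order is a wqo;
   the default value is irrelevant in that case) *)
Definition rank (S : T -> Prop) (s : list T) : Ord :=
  match excluded_middle_informative (Acc (inco_child S) s) with
  | left H => rank_acc S s H
  | right _ => ozero
  end.

Definition width (S : T -> Prop) : Ord :=
  osup {s | inco_node S s} (fun s => rank S (proj1_sig s)).

Definition order_iso (S U : T -> Prop) : Prop :=
  exists (f : {x | S x} -> {x | U x}) (g : {x | U x} -> {x | S x}),
    (forall a, g (f a) = a) /\ (forall b, f (g b) = b) /\
    (forall a a', le (proj1_sig a) (proj1_sig a') <->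
                  le (proj1_sig (f a)) (proj1_sig (f a'))).

Definition quasi_incomparable_family (m : nat) (Afam : nat -> T -> Prop) : Prop :=
  forall i, 1 <= i <= m ->
    forall Y : list T,
      (forall y, In y Y -> exists j, 1 <= j < i /\ Afam j y) ->
      exists A' : T -> Prop,
        (forall x, A' x -> Afam i x) /\
        order_iso A' (Afam i) /\
        incomp_sets A' (fun y => In y Y).

Fixpoint width_sum (Afam : nat -> T -> Prop) (n : nat) : Ord :=
  match n with
  | 0 => ozero
  | S n' => oadd (width (Afam n)) (width_sum Afam n')
  end.

End QO.

From Stdlib Require Import List Lia Classical ClassicalEpsilon
  FunctionalExtensionality ProofIrrelevance.
Import ListNotations.

(* Since A is a wqo, the forest Inco(A) is well-founded and its rank can only
   drop along extensions of a node.  Quasi-incomparability gives, for every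
   antichain s drawn from A_1, ..., A_(k-1), an order-reflecting copy of A_k
   incomparable to s, so the extensions of s contain a copy of Inco(A_k): if all
   extensions of s by antichains of that copy have rank at least a, then s has
   rank at least a + w(A_k).  Peeling off A_m, A_(m-1), ..., A_1 in turn gives
   w(A_m) + ... + w(A_1) <= rank [] <= w(A). *)

Lemma ole_refl a : ole a a.
Proof. induction a as [X f IH]; simpl; intro i; exists i; apply IH. Qed.

Lemma ole_trans a b c : ole a b -> ole b c -> ole a c.
Proof.
  revert b c; induction a as [X f IH]; intros [Y g] [Z h] Hab Hbc i; simpl in *.
  destruct (Hab i) as [j Hj]; destruct (Hbc j) as [k Hk].
  exists k; eapply IH; eauto.
Qed.

Lemma ole_osup X f (i : X) : ole (f i) (osup X f).
Proof.
  remember (f i) as a eqn:E; revert X f i E.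
  induction a as [Y g IH]; intros X f i E y; exists i; rewrite <- E.
  exact (IH y Y g y eq_refl).
Qed.

Lemma ole_ozero a : ole ozero a.
Proof. destruct a; intros []. Qed.

Lemma oadd_ozero_le a : ole (oadd a ozero) a.
Proof. destruct a as [X f]; intros [i|[]]; exists i; apply ole_refl. Qed.

Lemma ole_oadd_ozero_l b : ole b (oadd ozero b).
Proof. induction b as [Y g IH]; intro y; exists (inr y); apply IH. Qed.

Lemma oadd_assoc_le a b c : ole (oadd a (oadd b c)) (oadd (oadd a b) c).
Proof.
  revert a b; induction c as [Z h IH]; intros [X f] [Y g]; intros [i|[j|k]].
  - exists (inl (inl i)); apply ole_refl.
  - exists (inl (inr j)); apply ole_refl.
  - exists (inr k); apply IH.
Qed.

Section ForallOrdPairsFacts.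

Variables (A : Type) (R : A -> A -> Prop).

Lemma ForallOrdPairs_app_inv_l l1 l2 :
  ForallOrdPairs R (l1 ++ l2) -> ForallOrdPairs R l1.
Proof.
  induction l1 as [|a l1 IH]; simpl; intro H; [constructor|].
  inversion H as [|? ? Ha Hl]; subst.
  constructor; [apply Forall_app in Ha; tauto | auto].
Qed.

Lemma ForallOrdPairs_snoc_inv l a b :
  ForallOrdPairs R (l ++ [b]) -> In a l -> R a b.
Proof.
  induction l as [|c l IH]; simpl; intros H Ha; [contradiction|].
  inversion H as [|? ? Hc Hl]; subst.
  destruct Ha as [<-|Ha]; [|auto].
  rewrite Forall_forall in Hc; apply Hc, in_or_app; simpl; auto.
Qed.

Lemma ForallOrdPairs_app l1 l2 :
  ForallOrdPairs R l1 -> ForallOrdPairs R l2 ->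
  (forall a b, In a l1 -> In b l2 -> R a b) -> ForallOrdPairs R (l1 ++ l2).
Proof.
  induction l1 as [|a l1 IH]; simpl; intros H1 H2 H; auto.
  inversion H1; subst; constructor.
  - apply Forall_app; split; [assumption|].
    apply Forall_forall; intros; apply H; simpl; auto.
  - apply IH; simpl in H; auto.
Qed.

Lemma ForallOrdPairs_map (R' : A -> A -> Prop) (P : A -> Prop) (f : A -> A) l :
  Forall P l -> (forall x y, P x -> P y -> R x y -> R' (f x) (f y)) ->
  ForallOrdPairs R l -> ForallOrdPairs R' (map f l).
Proof.
  intros HP Hf; induction l as [|a l IH]; simpl; intro H; constructor;
    inversion H as [|? ? Ha Hl]; inversion HP as [|? ? Pa Pl]; subst; auto.
  apply Forall_map; rewrite Forall_forall in Ha, Pl |- *; auto.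
Qed.

End ForallOrdPairsFacts.

Lemma not_Acc_descending_chain (A : Type) (R : A -> A -> Prop) x :
  ~ Acc R x -> exists c : nat -> A, c 0 = x /\ forall n, R (c (S n)) (c n).
Proof.
  intro Hx.
  assert (step : forall y : {y | ~ Acc R y},
             {z : {z | ~ Acc R z} | R (proj1_sig z) (proj1_sig y)}).
  { intros [y Hy]; apply constructive_indefinite_description.
    apply NNPP; intro Hn; apply Hy; constructor; intros z Hz.
    apply NNPP; intro Hz'; apply Hn; exists (exist _ z Hz'); exact Hz. }
  pose (c := fix c n := match n with
                        | 0 => exist _ x Hx
                        | S n => proj1_sig (step (c n))
                        end).
  exists (fun n => proj1_sig (c n)); split; [reflexivity|].
  intro n; exact (proj2_sig (step (c n))).
Qed.

Section IncoForest.

Variables (T : Type) (le : T -> T -> Prop).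

Local Notation incomp := (incomp T le).
Local Notation antichain := (ForallOrdPairs incomp).
Local Notation inco_child := (inco_child T le).
Local Notation rank := (rank T le).
Local Notation full := (fun _ : T => True).

Lemma rank_eq S s :
  Acc (inco_child S) s ->
  rank S s = osup {t | inco_child S t s} (fun t => rank S (proj1_sig t)).
Proof.
  intro Hs; unfold rank at 1.
  destruct (excluded_middle_informative _) as [Hs'|]; [|contradiction].
  unfold rank_acc; rewrite <- Fix_F_eq; f_equal.
  apply functional_extensionality_dep; intros [t Ht]; simpl; unfold rank.
  destruct (excluded_middle_informative _) as [Ht'|Ht'].
  - rewrite (proof_irrelevance _ (Acc_inv Hs' Ht) Ht'); reflexivity.
  - contradiction (Acc_inv Hs' Ht).
Qed.

Lemma inco_child_full_snoc v a :
  antichain (v ++ [a]) -> inco_child full (v ++ [a]) v.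
Proof.
  intro H; split; [|eauto]; repeat split; [|apply Forall_forall; auto|exact H].
  intro E; exact (app_cons_not_nil _ _ _ (eq_sym E)).
Qed.

Lemma order_iso_reflecting_map S V :
  order_iso T le S V ->
  exists phi : T -> T,
    (forall x, V x -> S (phi x)) /\
    (forall x y, V x -> V y -> le (phi x) (phi y) -> le x y).
Proof.
  intros [f [g [_ [Hfg Hle]]]].
  exists (fun x => match excluded_middle_informative (V x) with
                   | left h => proj1_sig (g (exist _ x h))
                   | right _ => x
                   end).
  split.
  - intros x Vx; destruct (excluded_middle_informative _); [|contradiction].
    exact (proj2_sig _).
  - intros x y Vx Vy.
    destruct (excluded_middle_informative (V x)) as [hx|]; [|contradiction].
    destruct (excluded_middle_informative (V y)) as [hy|]; [|contradiction].
    intro H; apply (Hle (g (exist _ x hx)) (g (exist _ y hy))) in H.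
    rewrite !Hfg in H; exact H.
Qed.

Definition family_union (Afam : nat -> T -> Prop) (k : nat) (y : T) : Prop :=
  exists j, 1 <= j <= k /\ Afam j y.

Section Wqo.

Hypothesis le_wqo : wqo T le.

(* A strictly descending chain in Inco(A) appends one element at each step;
   the appended elements form a bad sequence. *)
Lemma inco_child_full_wf : well_founded (inco_child full).
Proof.
  intro s0; apply NNPP; intro Hs0.
  destruct (not_Acc_descending_chain _ _ _ Hs0) as [c [_ Hc]].
  destruct (choice (fun n x => c (S n) = c n ++ [x])) as [x Hx].
  { intro n; exact (proj2 (Hc n)). }
  assert (Hin : forall i j, i < j -> In (x i) (c j)).
  { intros i j Hij; induction Hij; rewrite Hx; apply in_or_app; simpl; auto. }
  destruct (proj2 le_wqo x) as [i [j [Hij Hle]]].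
  destruct (Hc j) as [[_ [_ Hanti]] _]; rewrite Hx in Hanti.
  exact (proj1 (ForallOrdPairs_snoc_inv _ _ _ _ _ Hanti (Hin i j Hij)) Hle).
Qed.

Lemma rank_full_app_le v w :
  antichain (v ++ w) -> ole (rank full (v ++ w)) (rank full v).
Proof.
  revert v; induction w as [|a w IH]; intros v H.
  - rewrite app_nil_r; apply ole_refl.
  - change (a :: w) with ([a] ++ w) in *; rewrite app_assoc in *.
    eapply ole_trans; [exact (IH _ H)|].
    rewrite (rank_eq _ v (inco_child_full_wf v)).
    pose proof (inco_child_full_snoc v a (ForallOrdPairs_app_inv_l _ _ _ _ H)) as Hc.
    exact (ole_osup _ (fun t => rank full (proj1_sig t))
                    (exist (fun t => inco_child full t v) _ Hc)).
Qed.

Lemma rank_full_nil_le_width : ole (rank full []) (width T le full).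
Proof.
  rewrite (rank_eq _ [] (inco_child_full_wf [])); intros [t Ht].
  exists (exist _ t (proj1 Ht)); apply ole_refl.
Qed.

Section Grafting.

Variables (B : T -> Prop) (phi : T -> T) (s : list T).

Hypothesis s_antichain : antichain s.
Hypothesis phi_incomp : forall x, B x -> forall y, In y s -> incomp (phi x) y.
Hypothesis phi_reflects : forall x y, B x -> B y -> le (phi x) (phi y) -> le x y.

Lemma antichain_app_map t :
  Forall B t -> antichain t -> antichain (s ++ map phi t).
Proof.
  intros HB Ht; apply ForallOrdPairs_app; [assumption| |].
  - apply (ForallOrdPairs_map _ incomp _ B); [assumption| |assumption].
    intros x y Bx By [Hxy Hyx]; split; auto.
  - intros y z Hy Hz; apply in_map_iff in Hz as [x [<- Hx]].
    rewrite Forall_forall in HB; destruct (phi_incomp x (HB x Hx) y Hy); split; auto.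
Qed.

Variable a : Ord.

Hypothesis a_le_rank :
  forall t, Forall B t -> antichain t -> ole a (rank full (s ++ map phi t)).

Lemma oadd_rank_le t :
  Forall B t -> antichain t -> ole (oadd a (rank B t)) (rank full (s ++ map phi t)).
Proof.
  intros HB Ht.
  destruct (classic (Acc (inco_child B) t)) as [Hacc|Hacc].
  (* outside the well-founded part of Inco(B), [rank B t] is the junk [ozero] *)
  2:{ unfold rank at 1; destruct (excluded_middle_informative _); [contradiction|].
      exact (ole_trans _ _ _ (oadd_ozero_le a) (a_le_rank t HB Ht)). }
  induction Hacc as [t Hacc IH].
  pose proof (a_le_rank t HB Ht) as Ha.
  rewrite (rank_eq _ t (Acc_intro _ Hacc)).
  rewrite (rank_eq _ _ (inco_child_full_wf _)) in *.
  destruct a as [X f]; intros [i|[t' Ht']].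
  - exact (Ha i).
  - pose proof Ht' as [[_ [HB' Ht'']] [x ->]].
    assert (Hc : inco_child full (s ++ map phi (t ++ [x])) (s ++ map phi t)).
    { rewrite map_app, app_assoc; apply inco_child_full_snoc.
      rewrite <- app_assoc; change [phi x] with (map phi [x]); rewrite <- map_app.
      apply antichain_app_map; assumption. }
    exists (exist (fun u => inco_child full u _) _ Hc); apply IH; assumption.
Qed.

Lemma oadd_width_le : ole (oadd a (width T le B)) (rank full s).
Proof.
  pose proof oadd_rank_le as Hgraft.
  pose proof (a_le_rank [] (Forall_nil _) (FOP_nil _)) as Ha.
  rewrite app_nil_r in Ha.
  unfold width; rewrite (rank_eq _ _ (inco_child_full_wf s)) in *.
  destruct a as [X f]; intros [i|[[|x t] [Hne [HB Ht]]]]; [exact (Ha i)|contradiction|].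
  pose proof (antichain_app_map _ HB Ht) as Hxt.
  change (map phi (x :: t)) with ([phi x] ++ map phi t) in Hxt.
  rewrite app_assoc in Hxt.
  exists (exist (fun u => inco_child full u s) _
            (inco_child_full_snoc s (phi x) (ForallOrdPairs_app_inv_l _ _ _ _ Hxt))).
  eapply ole_trans; [exact (Hgraft (x :: t) HB Ht)|].
  change (map phi (x :: t)) with ([phi x] ++ map phi t); rewrite app_assoc.
  exact (rank_full_app_le _ _ Hxt).
Qed.

End Grafting.

Lemma oadd_width_sum_le_rank_nil m Afam :
  quasi_incomparable_family T le m Afam ->
  forall k a, k <= m ->
  (forall s, Forall (family_union Afam k) s -> antichain s -> ole a (rank full s)) ->
  ole (oadd a (width_sum T le Afam k)) (rank full []).
Proof.
  intros Hqi k; induction k as [|k IH]; intros a Hk Ha.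
  - exact (ole_trans _ _ _ (oadd_ozero_le a) (Ha [] (Forall_nil _) (FOP_nil _))).
  - eapply ole_trans; [apply oadd_assoc_le|]; apply IH; [lia|].
    intros s Hs Hanti.
    destruct (Hqi (S k) ltac:(lia) s) as [A' [HA' [Hiso Hincomp]]].
    { intros y Hy; rewrite Forall_forall in Hs.
      destruct (Hs y Hy) as [j [Hj Hy']]; exists j; split; [lia|exact Hy']. }
    destruct (order_iso_reflecting_map _ _ Hiso) as [phi [Hphi Hrefl]].
    assert (Hphi_incomp : forall x, Afam (S k) x -> forall y, In y s -> incomp (phi x) y)
      by (intros; apply Hincomp; auto).
    apply (oadd_width_le _ phi s Hanti Hphi_incomp Hrefl).
    intros t Ht Htanti; apply Ha.
    + apply Forall_app; split.
      * refine (Forall_impl _ _ Hs); intros y [j [Hj Hy]].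
        exists j; split; [lia|exact Hy].
      * apply Forall_map; refine (Forall_impl _ _ Ht); intros x Hx.
        exists (S k); split; [lia|exact (HA' _ (Hphi x Hx))].
    + exact (antichain_app_map _ _ _ Hanti Hphi_incomp Hrefl t Ht Htanti).
Qed.

End Wqo.

End IncoForest.

Theorem mainTheorem2 (T : Type) (le : T -> T -> Prop) (m : nat)
    (Afam : nat -> T -> Prop) :
  wqo T le ->
  quasi_incomparable_family T le m Afam ->
  ole (width_sum T le Afam m) (width T le (fun _ => True)).
Proof.
  intros Hwqo Hqi.
  eapply ole_trans; [apply ole_oadd_ozero_l|].
  eapply ole_trans; [apply (oadd_width_sum_le_rank_nil _ _ Hwqo m Afam Hqi m)|].
  - apply le_n.
  - intros; apply ole_ozero.
  - exact (rank_full_nil_le_width _ _ Hwqo).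
Qed.
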